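(* Let $k$ be a positive integer and let $w=A_1A_2\ldots A_n$ be a nonempty word over $\mathcal{A}_k$ (with $A_i\in\mathcal{A}_k$). Let $I_w:=A_1\oplus A_2\oplus\cdots\oplus A_n\in\mathcal{I}_k$. Then $[\![ I_w]\!]=A_1\boxplus A_2\boxplus\cdots\boxplus A_n$.
   Context: A $k$-interface graph is a tuple $(G,\phi,L,R)$ with $G$ a finite simple graph, $L,R\subseteq V(G)$, and $\phi:V(G)\to\{1,\dots,k\}$ injective on $L$ and on $R$. Two $k$-interface graphs $(G_1,\phi_1,L_1,R_1)$, $(G_2,\phi_2,L_2,R_2)$ are compatible if, with $J=\phi_1(R_1)\cap\phi_2(L_2)$, we have $V(G_1)\cap V(G_2)=\phi_1^{-1}(J)\cap R_1=\phi_2^{-1}(J)\cap L_2$ and $\phi_1,\phi_2$ agree on $V(G_1)\cap V(G_2)$ (no condition on edges). Their gluing is $(G_1\cup G_2,\phi,L_1,R_2)$ where $\phi$ extends $\phi_1$ and $\phi_2$ and $G_1\cup G_2=(V_1\cup V_2,E_1\cup E_2)$. Isomorphism of $k$-interface graphs is a graph isomorphism preserving labels $\phi$ and membership in $L$ and in $R$. $\mathcal{I}_k$ is the set of isomorphism classes; for $I_1,I_2\in\mathcal{I}_k$, $I_1\oplus I_2$ is the class of the gluing of compatible representatives of $I_1$ and $I_2$ (well defined), making $(\mathcal{I}_k,\oplus)$ a semigroup. The torso $\mathrm{torso}(G,X)$ is the graph on $X$ where distinct $x_1,x_2$ are adjacent iff $G$ has an $x_1$–$x_2$ path with no internal vertex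 in $X$. The abstraction $[\![\mathbb{G}]\!]$ of $\mathbb{G}=(G,\phi,L,R)$ is the isomorphism class of $(\mathrm{torso}(G,L\cup R),\phi|_{L\cup R},L,R)$; it depends only on the isomorphism class $I$ of $\mathbb{G}$, written $[\![ I]\!]$. $\mathcal{A}_k\subseteq\mathcal{I}_k$ is the set of all abstractions, and for $A_1,A_2\in\mathcal{A}_k$, $A_1\boxplus A_2:=[\![ A_1\oplus A_2]\!]$; $(\mathcal{A}_k,\boxplus)$ is a finite semigroup. *)

From mathcomp Require Import all_boot.
From mathcomp Require Import finmap.
Set Implicit Arguments. Unset Strict Implicit. Unset Printing Implicit Defensive.
Local Open Scope fset_scope.

Record igraph := IGraph {
  gV : {fset nat};
  gE : nat -> nat -> Prop;
  gphi : nat -> nat;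
  gL : {fset nat};
  gR : {fset nat}
}.

Definition wf (k : nat) (G : igraph) : Prop :=
  (forall x, x \in gL G -> x \in gV G) /\
  (forall x, x \in gR G -> x \in gV G) /\
  (forall x y, gE G x y -> x \in gV G /\ y \in gV G) /\
  (forall x y, gE G x y -> gE G y x) /\
  (forall x, ~ gE G x x) /\
  (forall x, x \in gV G -> 1 <= gphi G x <= k) /\
  (forall x y, x \in gL G -> y \in gL G -> gphi G x = gphi G y -> x = y) /\
  (forall x y, x \in gR G -> y \in gR G -> gphi G x = gphi G y -> x = y).

Definition iso (k : nat) (G1 G2 : igraph) : Prop :=
  wf k G1 /\ wf k G2 /\
  exists f : nat -> nat,
    (forall x, x \in gV G1 -> f x \in gV G2) /\
    (forall x y, x \in gV G1 -> y \in gV G1 -> f x = f y -> x = y) /\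
    (forall y, y \in gV G2 -> exists2 x, x \in gV G1 & f x = y) /\
    (forall x y, x \in gV G1 -> y \in gV G1 -> (gE G1 x y <-> gE G2 (f x) (f y))) /\
    (forall x, x \in gV G1 -> gphi G2 (f x) = gphi G1 x) /\
    (forall x, x \in gV G1 -> (x \in gL G1) = (f x \in gL G2)) /\
    (forall x, x \in gV G1 -> (x \in gR G1) = (f x \in gR G2)).

(* Compatibility of (G1,phi1,L1,R1) and (G2,phi2,L2,R2), with
   J = phi1(R1) \cap phi2(L2). *)
Definition inJ (G1 G2 : igraph) (j : nat) : Prop :=
  (exists2 y, y \in gR G1 & gphi G1 y = j) /\
  (exists2 z, z \in gL G2 & gphi G2 z = j).

Definition compatible (G1 G2 : igraph) : Prop :=
  (forall x, (x \in gV G1 /\ x \in gV G2) <-> (x \in gR G1 /\ inJ G1 G2 (gphi G1 x))) /\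
  (forall x, (x \in gV G1 /\ x \in gV G2) <-> (x \in gL G2 /\ inJ G1 G2 (gphi G2 x))) /\
  (forall x, x \in gV G1 -> x \in gV G2 -> gphi G1 x = gphi G2 x).

Definition glue (G1 G2 : igraph) : igraph :=
  IGraph (gV G1 `|` gV G2) (fun x y => gE G1 x y \/ gE G2 x y)
         (fun x => if x \in gV G1 then gphi G1 x else gphi G2 x)
         (gL G1) (gR G2).

(* x = v_0, v_1, ..., v_m, y is a walk along edges of E, where
   p = [:: v_1; ...; v_m] lists the internal vertices. *)
Fixpoint walk (E : nat -> nat -> Prop) (x : nat) (p : seq nat) (y : nat) : Prop :=
  match p with
  | [::] => E x y
  | v :: p' => E x v /\ walk E v p' y
  end.

Definition torso_adj (G : igraph) (X : {fset nat}) (x1 x2 : nat) : Prop :=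
  x1 \in X /\ x2 \in X /\ x1 <> x2 /\
  exists p : seq nat, walk (gE G) x1 p x2 /\ all (fun v => v \notin X) p.

Definition abstraction (G : igraph) : igraph :=
  IGraph (gL G `|` gR G) (torso_adj G (gL G `|` gR G)) (gphi G) (gL G) (gR G).

(* Isomorphism classes, represented as predicates on interface graphs. *)
Definition iclass := igraph -> Prop.

Definition cls (k : nat) (G : igraph) : iclass := fun H => iso k G H.

Definition in_I (k : nat) (C : iclass) : Prop := exists2 G, wf k G & C = cls k G.

Definition oplus (k : nat) (C1 C2 : iclass) : iclass := fun H =>
  exists G1 G2, [/\ C1 G1, C2 G2, compatible G1 G2 & iso k (glue G1 G2) H].

Definition abs (k : nat) (C : iclass) : iclass := fun H =>
  exists2 G, C G & iso k (abstraction G) H.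

Definition in_A (k : nat) (A : iclass) : Prop := exists2 I, in_I k I & A = abs k I.

Definition boxplus (k : nat) (A1 A2 : iclass) : iclass := abs k (oplus k A1 A2).

Fixpoint all_letters (P : iclass -> Prop) (w : seq iclass) : Prop :=
  match w with [::] => True | a :: w' => P a /\ all_letters P w' end.

(* The torso of a gluing G1 + G2 on its interface L1 u R2 only depends on the
   torsos of G1 and G2.  Indeed torso(torso(H, Z), X) = torso(H, X) for X ⊆ Z,
   and for Z the union of the interfaces of G1 and G2 the torso of the gluing is
   the gluing of the two torsos: a path with no inner vertex in Z cannot pass
   through a shared vertex (these lie in R1), so it stays inside one side.
   Hence [[I + A]] = [[ [[I]] + A ]].  For the inclusion from right to left, a
   representative of [[I]] glued to a graph of A is lifted back to a graph of I
   by renaming the inner vertices of a suitable graph of I apart from everything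
   else.  Induction along the word concludes, as [[A1]] = A1. *)

From mathcomp Require Import all_boot finmap zify.
From Stdlib Require Import FunctionalExtensionality PropExtensionality.
Set Implicit Arguments. Unset Strict Implicit. Unset Printing Implicit Defensive.
Local Open Scope fset_scope.

Section Walks.
Variable E : nat -> nat -> Prop.

Lemma walk_cat x p m q y :
  walk E x (p ++ m :: q) y <-> walk E x p m /\ walk E m q y.
Proof. by elim: p x => [|a p IH] x /=; rewrite ?IH; tauto. Qed.

Lemma walk_sub (E' : nat -> nat -> Prop) x p y :
  (forall a b, E a b -> E' a b) -> walk E x p y -> walk E' x p y.
Proof. by move=> EE'; elim: p x => [|a p IH] x /=; [apply: EE' | case=> /EE'; auto]. Qed.

Lemma walk_map (E' : nat -> nat -> Prop) f x p y :
  (forall a b, E a b -> E' (f a) (f b)) -> walk E x p y -> walk E' (f x) (map f p) (f y).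
Proof. by move=> EE'; elim: p x => [|a p IH] x /=; [apply: EE' | case=> /EE'; auto]. Qed.

Lemma walk_rev x p y :
  (forall a b, E a b -> E b a) -> walk E x p y -> walk E y (rev p) x.
Proof.
move=> Esym; elim: p x => [|a p IH] x /=; first exact: Esym.
by case=> xa /IH ap; rewrite rev_cons -cats1; apply/walk_cat; split => //=; apply: Esym.
Qed.

Lemma walk_support (V : {fset nat}) x p y :
  (forall a b, E a b -> a \in V /\ b \in V) -> walk E x p y ->
  [/\ x \in V, y \in V & {subset p <= V}].
Proof.
move=> EV; elim: p x => [|a p IH] x /=; first by case/EV.
case=> /EV [xV aV] /IH [_ yV pV]; split => // v; rewrite inE => /predU1P [->|] //.
exact: pV.
Qed.

Lemma walk_pullback (E' : nat -> nat -> Prop) f (V V' : {fset nat}) x p' y :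
  (forall a b, E' a b -> a \in V' /\ b \in V') ->
  (forall y', y' \in V' -> exists2 x, x \in V & f x = y') ->
  (forall a b, a \in V -> b \in V -> E a b <-> E' (f a) (f b)) ->
  x \in V -> y \in V -> walk E' (f x) p' (f y) -> exists2 p, walk E x p y & map f p = p'.
Proof.
move=> E'V onto EE' + yV; elim: p' x => [|a' p' IH] x xV /=.
  by move=> /EE'-/(_ xV yV) xy; exists [::].
case=> xa' w; have [_ /onto [a aV ea]] := E'V _ _ xa'; subst a'.
have [p ap <-] := IH a aV w; exists (a :: p) => //=.
by split => //; apply/EE'.
Qed.

End Walks.

Definition linked (E : nat -> nat -> Prop) (X : {fset nat}) (x y : nat) : Prop :=
  exists p, walk E x p y /\ all (fun v => v \notin X) p.

Lemma linked_trans E X x m y :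
  linked E X x m -> linked E X m y -> m \notin X -> linked E X x y.
Proof.
move=> [p [xm pX]] [q [my qX]] mX; exists (p ++ m :: q).
by rewrite all_cat /= pX qX mX; split => //; apply/walk_cat.
Qed.

Lemma linked_subset E (X Z : {fset nat}) x y :
  {subset X <= Z} -> linked E Z x y -> linked E X x y.
Proof.
move=> XZ [p [w pZ]]; exists p; split => //; apply/allP => v /(allP pZ).
by apply: contra; apply: XZ.
Qed.

Lemma linked_of_walk (E F : nat -> nat -> Prop) X x p y :
  (forall a b, E a b -> linked F X a b) ->
  walk E x p y -> all (fun v => v \notin X) p -> linked F X x y.
Proof.
move=> EF; elim: p x => [|v p IH] x /=; first by move=> /EF.
by case=> /EF xv /IH vy /andP [vX /vy vy']; apply: linked_trans xv vy' vX.
Qed.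

(* Cut the walk at its vertices in Z: each piece is an edge of torso(Z),
   unless it is a closed loop, which is dropped. *)
Lemma linked_contract (E T : nat -> nat -> Prop) (X Z : {fset nat}) x y :
  (forall a b, a \in Z -> b \in Z -> a <> b -> linked E Z a b -> T a b) ->
  x \in Z -> y \in Z -> linked E X x y -> x = y \/ linked T X x y.
Proof.
move=> ET xZ yZ [p [w pX]].
have edge a b : a \in Z -> b \in Z -> linked E Z a b -> a = b \/ linked T X a b.
  move=> aZ bZ ab; have [->|ne] := eqVneq a b; [by left | right].
  by exists [::]; split => //; apply: ET => //; apply/eqP.
suff: forall r, all (fun v => v \notin Z) r -> walk E x (r ++ p) y -> x = y \/ linked T X x y.
  by move/(_ [::] isT w).
elim: p x xZ pX {w} => [|v p IH] x xZ /= pX r rZ.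
  by rewrite cats0 => w; apply: edge => //; exists r.
case/andP: pX => vX pX; have [vZ|vZ] := boolP (v \in Z).
  case/walk_cat=> xv vy.
  have [->|lxv] := edge x v xZ vZ (ex_intro _ r (conj xv rZ)).
    exact: IH vZ pX [::] isT vy.
  have [<-|lvy] := IH v vZ pX [::] isT vy; first by right.
  by right; apply: linked_trans lvy vX.
rewrite -cat_rcons => w; apply: IH w => //.
by rewrite all_rcons vZ.
Qed.

Lemma torso_adj_torso (G H : igraph) (Z X : {fset nat}) :
  (forall a b, gE G a b <-> torso_adj H Z a b) -> {subset X <= Z} ->
  forall a b, torso_adj G X a b <-> torso_adj H X a b.
Proof.
move=> GH XZ a b; split=> -[aX [bX [ab lk]]]; do 3 split => //.
  case: lk => p [w pX]; apply: linked_of_walk w pX => u v /GH [_ [_ [_]]].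
  exact: linked_subset.
have ZG u v : u \in Z -> v \in Z -> u <> v -> linked (gE H) Z u v -> gE G u v.
  by move=> uZ vZ uv luv; apply/GH.
by case: (linked_contract ZG (XZ _ aX) (XZ _ bX) lk).
Qed.

Section WellFormed.
Variables (k : nat) (G : igraph).
Hypothesis wG : wf k G.

Lemma wf_L : {subset gL G <= gV G}. Proof. by case: wG. Qed.
Lemma wf_R : {subset gR G <= gV G}. Proof. by case: wG => _ []. Qed.

Lemma wf_boundary : {subset gL G `|` gR G <= gV G}.
Proof. by move=> x; rewrite in_fsetU => /orP [/wf_L | /wf_R]. Qed.

Lemma wf_edge x y : gE G x y -> x \in gV G /\ y \in gV G.
Proof. by case: wG => _ [_ [EV _]]; apply: EV. Qed.

End WellFormed.

(* Equality of interface graphs, blind to the values of [gphi] off the vertex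
   set and comparing the Prop-valued edge relations pointwise. *)
Record same_igraph (G G' : igraph) : Prop := SameIgraph {
  same_V : gV G = gV G';
  same_E : forall x y, gE G x y <-> gE G' x y;
  same_phi : {in gV G, gphi G =1 gphi G'};
  same_L : gL G = gL G';
  same_R : gR G = gR G' }.

Lemma same_refl G : same_igraph G G.
Proof. by []. Qed.

Lemma same_sym G G' : same_igraph G G' -> same_igraph G' G.
Proof.
case=> eV eE ephi eL eR; split => // [x y | x]; first by rewrite eE.
by rewrite -eV => xV; rewrite ephi.
Qed.

Lemma same_trans G1 G2 G3 :
  same_igraph G1 G2 -> same_igraph G2 G3 -> same_igraph G1 G3.
Proof.
case=> eV eE ephi eL eR [eV' eE' ephi' eL' eR']; split; rewrite ?eV ?eL ?eR //.
  by move=> x y; rewrite eE eE'.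
by move=> x xV; rewrite ephi ?ephi' // eV.
Qed.

Lemma wf_same k G G' : same_igraph G G' -> wf k G -> wf k G'.
Proof.
case=> eV eE ephi eL eR [wL [wR [wE [wsym [wirr [wphi [winjL winjR]]]]]]].
rewrite /wf -eV -eL -eR; do 2 split => //.
split; first by move=> x y /eE /wE.
split; first by move=> x y /eE /wsym /eE.
split; first by move=> x /eE /wirr.
split; first by move=> x xV; rewrite -ephi //; apply: wphi.
split; first by move=> x y xL yL; rewrite -!ephi ?wL //; apply: winjL.
by move=> x y xR yR; rewrite -!ephi ?wR //; apply: winjR.
Qed.

Record iso_map (G1 G2 : igraph) (f : nat -> nat) : Prop := IsoMap {
  iso_mapV : forall x, x \in gV G1 -> f x \in gV G2;
  iso_map_inj : {in gV G1 &, injective f};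
  iso_map_onto : forall y, y \in gV G2 -> exists2 x, x \in gV G1 & f x = y;
  iso_mapE : forall x y, x \in gV G1 -> y \in gV G1 -> gE G1 x y <-> gE G2 (f x) (f y);
  iso_map_phi : forall x, x \in gV G1 -> gphi G2 (f x) = gphi G1 x;
  iso_mapL : forall x, x \in gV G1 -> (x \in gL G1) = (f x \in gL G2);
  iso_mapR : forall x, x \in gV G1 -> (x \in gR G1) = (f x \in gR G2) }.

Lemma isoP k G1 G2 :
  iso k G1 G2 <-> [/\ wf k G1, wf k G2 & exists f, iso_map G1 G2 f].
Proof.
split=> [[w1 [w2 [f [? [? [? [? [? [? ?]]]]]]]]] | [w1 w2 [f []]]].
  by split => //; exists f.
by do 2 (split => //); exists f.
Qed.

Lemma iso_wf_l k G1 G2 : iso k G1 G2 -> wf k G1. Proof. by case. Qed.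
Lemma iso_wf_r k G1 G2 : iso k G1 G2 -> wf k G2. Proof. by case=> _ []. Qed.

Lemma iso_of_same k G G' : same_igraph G G' -> wf k G -> iso k G G'.
Proof.
move=> eG wG; apply/isoP; split; [done | exact: wf_same wG | exists id].
case: eG => eV eE ephi eL eR; split; rewrite -?eV -?eL -?eR //=.
- by move=> y yV; exists y.
- by move=> x /ephi ->.
Qed.

Lemma iso_refl k G : wf k G -> iso k G G.
Proof. exact: iso_of_same (same_refl G). Qed.

Lemma iso_trans k G1 G2 G3 : iso k G1 G2 -> iso k G2 G3 -> iso k G1 G3.
Proof.
move=> /isoP [w1 _ [f fG]] /isoP [_ w3 [g gG]]; apply/isoP; split => //.
exists (g \o f); split => /= [x xV | x y xV yV | z zV | x y xV yV | x xV | x xV | x xV].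
- by apply: (iso_mapV gG); apply: (iso_mapV fG).
- by move=> /(iso_map_inj gG (iso_mapV fG xV) (iso_mapV fG yV)); apply: (iso_map_inj fG).
- have [y yV <-] := iso_map_onto gG zV; have [x xV <-] := iso_map_onto fG yV.
  by exists x.
- by rewrite (iso_mapE fG) // (iso_mapE gG) //; apply: (iso_mapV fG).
- by rewrite (iso_map_phi gG) ?(iso_map_phi fG) //; apply: (iso_mapV fG).
- by rewrite (iso_mapL fG) // (iso_mapL gG) //; apply: (iso_mapV fG).
- by rewrite (iso_mapR fG) // (iso_mapR gG) //; apply: (iso_mapV fG).
Qed.

Lemma iso_map_same A A' B f : same_igraph A A' -> iso_map A B f -> iso_map A' B f.
Proof.
case=> eV eE ephi eL eR fA; split; rewrite -?eV.
- exact: iso_mapV fA.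
- exact: iso_map_inj fA.
- exact: iso_map_onto fA.
- by move=> x y xA yA; rewrite -eE; apply: (iso_mapE fA).
- by move=> x xA; rewrite -ephi // (iso_map_phi fA).
- by move=> x xA; rewrite -eL (iso_mapL fA).
- by move=> x xA; rewrite -eR (iso_mapR fA).
Qed.

Lemma same_of_iso_maps k A B C f g : wf k B -> wf k C ->
  iso_map A B f -> iso_map A C g -> {in gV A, f =1 g} -> same_igraph B C.
Proof.
move=> wB wC fB gC fg; split.
- apply/fsetP => y; apply/idP/idP.
    by case/(iso_map_onto fB) => x xA <-; rewrite fg //; apply: (iso_mapV gC).
  by case/(iso_map_onto gC) => x xA <-; rewrite -fg //; apply: (iso_mapV fB).
- move=> u v; split => uv.
    case: (wf_edge wB uv) => /(iso_map_onto fB) [a aA ea] /(iso_map_onto fB) [b bA eb].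
    rewrite -ea -eb in uv *; rewrite !fg // -(iso_mapE gC) //; exact/(iso_mapE fB).
  case: (wf_edge wC uv) => /(iso_map_onto gC) [a aA ea] /(iso_map_onto gC) [b bA eb].
  rewrite -ea -eb in uv *; rewrite -!fg // -(iso_mapE fB) //; exact/(iso_mapE gC).
- by move=> y /(iso_map_onto fB) [x xA <-]; rewrite (iso_map_phi fB) // fg // (iso_map_phi gC).
- apply/fsetP => y; apply/idP/idP => yL.
    have [x xA fx] := iso_map_onto fB (wf_L wB yL).
    by move: yL; rewrite -fx -(iso_mapL fB) // fg // (iso_mapL gC).
  have [x xA gx] := iso_map_onto gC (wf_L wC yL).
  by move: yL; rewrite -gx -(iso_mapL gC) // -fg // (iso_mapL fB).
- apply/fsetP => y; apply/idP/idP => yR.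
    have [x xA fx] := iso_map_onto fB (wf_R wB yR).
    by move: yR; rewrite -fx -(iso_mapR fB) // fg // (iso_mapR gC).
  have [x xA gx] := iso_map_onto gC (wf_R wC yR).
  by move: yR; rewrite -gx -(iso_mapR gC) // -fg // (iso_mapR fB).
Qed.

Lemma iso_map_boundary G G' f x : iso_map G G' f -> x \in gV G ->
  (x \in gL G `|` gR G) = (f x \in gL G' `|` gR G').
Proof. by move=> fG xV; rewrite !in_fsetU (iso_mapL fG) // (iso_mapR fG). Qed.

Lemma torso_adj_iso k G G' f x y : wf k G -> wf k G' -> iso_map G G' f ->
  x \in gV G -> y \in gV G ->
  torso_adj G (gL G `|` gR G) x y <-> torso_adj G' (gL G' `|` gR G') (f x) (f y).
Proof.
move=> wG wG' fG xV yV; have Yf := iso_map_boundary fG.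
rewrite /torso_adj -!Yf //; split=> -[xY [yY [xy [p [w pY]]]]]; do 2 split => //.
  split; first by move/(iso_map_inj fG xV yV).
  have [_ _ pV] := walk_support (wf_edge wG) w.
  exists (map f p); split.
    by apply: walk_map w => a b ab; have [aV bV] := wf_edge wG ab; apply/(iso_mapE fG).
  by rewrite all_map; apply/allP => v vp /=; rewrite -Yf ?pV //; apply: (allP pY).
split; first by move=> exy; apply: xy; rewrite exy.
have [q wq eq] := walk_pullback (wf_edge wG') (iso_map_onto fG) (iso_mapE fG) xV yV w.
have [_ _ qV] := walk_support (wf_edge wG) wq.
exists q; split => //; apply/allP => v vq.
by rewrite Yf ?qV //; apply: (allP pY); rewrite -eq map_f.
Qed.

Lemma torso_adj_same G G' X x y : (forall a b, gE G a b <-> gE G' a b) ->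
  torso_adj G X x y <-> torso_adj G' X x y.
Proof.
move=> eE; split=> -[xX [yX [xy [p [w pX]]]]]; do 3 split => //; exists p.
  by split => //; apply: walk_sub w => a b /eE.
by split => //; apply: walk_sub w => a b /eE.
Qed.

Lemma wf_abstraction k G : wf k G -> wf k (abstraction G).
Proof.
move=> wG; have [_ [_ [_ [wsym [_ [wphi [winjL winjR]]]]]]] := wG.
split; first by move=> x /= xL; rewrite in_fsetU xL.
split; first by move=> x /= xR; rewrite in_fsetU xR orbT.
split; first by move=> x y [xX [yX _]].
split.
  move=> x y [xX [yX [xy [p [w pX]]]]]; do 3 split => //; first by move/esym.
  by exists (rev p); rewrite all_rev; split => //; apply: walk_rev w.
split; first by move=> x [_ [_ []]].
split; first by move=> x /(wf_boundary wG); apply: wphi.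
by split.
Qed.

Lemma abstraction_iso_map k G G' f : wf k G -> wf k G' -> iso_map G G' f ->
  iso_map (abstraction G) (abstraction G') f.
Proof.
move=> wG wG' fG; have YV := wf_boundary wG; have Yf := iso_map_boundary fG.
split => /= [x xY | x y xY yY | y yY | x y xY yY | x xY | x xY | x xY].
- by rewrite -Yf ?YV.
- by apply: (iso_map_inj fG); apply: YV.
- have [x xV fx] := iso_map_onto fG (wf_boundary wG' yY).
  by exists x => //; rewrite Yf // fx.
- by apply: (torso_adj_iso wG wG' fG); apply: YV.
- exact: (iso_map_phi fG (YV _ xY)).
- exact: (iso_mapL fG (YV _ xY)).
- exact: (iso_mapR fG (YV _ xY)).
Qed.

Lemma abstraction_iso k G G' : iso k G G' -> iso k (abstraction G) (abstraction G').
Proof.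
move=> /isoP [wG wG' [f fG]]; apply/isoP.
split; [exact: wf_abstraction wG | exact: wf_abstraction wG' | exists f].
exact: abstraction_iso_map wG wG' fG.
Qed.

Lemma abstraction_idem G : same_igraph (abstraction (abstraction G)) (abstraction G).
Proof. by split => // x y; apply: (torso_adj_torso (Z := gL G `|` gR G)). Qed.

Lemma abstraction_same k G G' : wf k G -> same_igraph G G' ->
  same_igraph (abstraction G) (abstraction G').
Proof.
move=> wG [eV eE ephi eL eR]; split => /=; rewrite -?eL -?eR //.
  by move=> x y; apply: torso_adj_same.
by move=> x /(wf_boundary wG); apply: ephi.
Qed.

Lemma torso_adj_restrict k G (Y Z : {fset nat}) x y : wf k G ->
  (forall v, (v \in Y) = (v \in Z) && (v \in gV G)) ->
  torso_adj G Y x y <-> torso_adj G Z x y.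
Proof.
move=> wG eY; split=> -[xS [yS [xy [p [w pS]]]]];
  have [xV yV pV] := walk_support (wf_edge wG) w.
  move: xS yS; rewrite !eY => /andP [xZ _] /andP [yZ _]; do 3 split => //.
  exists p; split => //; apply/allP => v vp; move: (allP pS v vp).
  by rewrite eY pV ?andbT.
split; first by rewrite eY xS xV.
split; first by rewrite eY yS yV.
split => //; exists p; split => //; apply/allP => v vp; move: (allP pS v vp).
by rewrite eY; apply: contraNN => /andP [].
Qed.

Lemma glue_same G1 G1' G2 G2' : same_igraph G1 G1' -> same_igraph G2 G2' ->
  same_igraph (glue G1 G2) (glue G1' G2').
Proof.
case=> eV1 eE1 ephi1 eL1 eR1 [eV2 eE2 ephi2 eL2 eR2].
split; rewrite /= -?eV1 -?eV2 -?eL1 -?eR2 //.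
  by move=> x y; rewrite eE1 eE2.
by move=> x; rewrite in_fsetU; case: ifP => [x1 _ | _ /= x2]; [apply: ephi1 | apply: ephi2].
Qed.

Section Gluing.
Variables (k : nat) (G1 G2 : igraph).
Hypotheses (wG1 : wf k G1) (wG2 : wf k G2) (G12 : compatible G1 G2).

Lemma compatible_shared x : x \in gV G1 -> x \in gV G2 -> x \in gR G1 /\ x \in gL G2.
Proof.
case: G12 => c1 [c2 _] x1 x2.
by split; [case/c1: (conj x1 x2) | case/c2: (conj x1 x2)].
Qed.

Lemma glue_phi_r x : x \in gV G2 -> gphi (glue G1 G2) x = gphi G2 x.
Proof. by move=> x2 /=; case: ifP => // x1; case: G12 => _ [_]; apply. Qed.

Lemma wf_glue : wf k (glue G1 G2).
Proof.
have [L1 [_ [E1 [sym1 [irr1 [phi1 [injL1 _]]]]]]] := wG1.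
have [_ [R2 [E2 [sym2 [irr2 [phi2 [_ injR2]]]]]]] := wG2.
split; first by move=> x /L1 x1 /=; rewrite in_fsetU x1.
split; first by move=> x /R2 x2 /=; rewrite in_fsetU x2 orbT.
split; first by move=> x y /= [/E1|/E2] [xV yV]; rewrite !in_fsetU xV yV ?orbT.
split; first by move=> x y /= [/sym1|/sym2]; auto.
split; first by move=> x /= [/irr1|/irr2].
split; first by move=> x /=; rewrite in_fsetU; case: ifP => [x1 _ | _ /= x2]; auto.
split; first by move=> x y /= xL yL; rewrite (L1 _ xL) (L1 _ yL); apply: injL1.
by move=> x y xR yR; rewrite !glue_phi_r ?R2 //; apply: injR2.
Qed.

Lemma compatible_abstraction : compatible (abstraction G1) (abstraction G2).
Proof.
have [c1 [c2 c3]] := G12; rewrite /compatible /=.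
have shared x : x \in gV G1 -> x \in gV G2 ->
    x \in gL G1 `|` gR G1 /\ x \in gL G2 `|` gR G2.
  by move=> x1 x2; have [xR xL] := compatible_shared x1 x2; rewrite !in_fsetU xR xL orbT.
split; [|split] => [x|x|x /(wf_boundary wG1) x1 /(wf_boundary wG2) x2]; last exact: c3.
  split=> [[/(wf_boundary wG1) x1 /(wf_boundary wG2) x2] | /c1 [x1 x2]]; first exact/c1.
  exact: shared.
split=> [[/(wf_boundary wG1) x1 /(wf_boundary wG2) x2] | /c2 [x1 x2]]; first exact/c2.
exact: shared.
Qed.

Lemma walk_glue x p y : walk (gE (glue G1 G2)) x p y ->
  all (fun v => (v \notin gV G1) || (v \notin gV G2)) p ->
  walk (gE G1) x p y \/ walk (gE G2) x p y.
Proof.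
elim: p x => [|v p IH] x /=; first by [].
case=> xv /IH vy /andP [vS /vy [w1 | w2]].
- case: xv => [e1 | e2]; first by left.
  have [v1 _ _] := walk_support (wf_edge wG1) w1.
  by have [_ v2] := wf_edge wG2 e2; rewrite v1 v2 in vS.
- case: xv => [e1 | e2]; last by right.
  have [v2 _ _] := walk_support (wf_edge wG2) w2.
  by have [_ v1] := wf_edge wG1 e1; rewrite v1 v2 in vS.
Qed.

Local Notation Y := ((gL G1 `|` gR G1) `|` (gL G2 `|` gR G2)).

Lemma boundary_glue_l x : (x \in gL G1 `|` gR G1) = (x \in Y) && (x \in gV G1).
Proof.
apply/idP/andP => [xY | [+ x1]]; first by rewrite in_fsetU xY (wf_boundary wG1).
rewrite in_fsetU => /orP [// | /(wf_boundary wG2) x2].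
by have [xR _] := compatible_shared x1 x2; rewrite in_fsetU xR orbT.
Qed.

Lemma boundary_glue_r x : (x \in gL G2 `|` gR G2) = (x \in Y) && (x \in gV G2).
Proof.
apply/idP/andP => [xY | [+ x2]]; first by rewrite in_fsetU xY orbT (wf_boundary wG2).
rewrite in_fsetU => /orP [/(wf_boundary wG1) x1 | //].
by have [_ xL] := compatible_shared x1 x2; rewrite in_fsetU xL.
Qed.

Lemma torso_adj_glue u v :
  torso_adj (glue G1 G2) Y u v <-> torso_adj G1 Y u v \/ torso_adj G2 Y u v.
Proof.
split=> [[uY [vY [uv [p [w pY]]]]] | [] [uY [vY [uv [p [w pY]]]]]].
- have pS : all (fun v => (v \notin gV G1) || (v \notin gV G2)) p.
    apply/allP => z /(allP pY); apply: contraR; rewrite negb_or !negbK => /andP [z1 z2].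
    by have [zR _] := compatible_shared z1 z2; rewrite !in_fsetU zR orbT.
  by case: (walk_glue w pS) => w'; [left | right]; do 3 split => //; exists p.
- by do 3 split => //; exists p; split => //; apply: walk_sub w => a b; left.
- by do 3 split => //; exists p; split => //; apply: walk_sub w => a b; right.
Qed.

Lemma glue_abstractionE u v :
  gE (glue (abstraction G1) (abstraction G2)) u v <-> torso_adj (glue G1 G2) Y u v.
Proof.
rewrite torso_adj_glue /= (torso_adj_restrict _ _ wG1 boundary_glue_l).
by rewrite (torso_adj_restrict _ _ wG2 boundary_glue_r).
Qed.

Lemma abstraction_glue : same_igraph (abstraction (glue G1 G2))
  (abstraction (glue (abstraction G1) (abstraction G2))).
Proof.
split => //= [x y | x xX].
  apply: iff_sym; apply: (torso_adj_torso glue_abstractionE).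
  by move=> v; rewrite !in_fsetU => /orP [-> | ->]; rewrite ?orbT.
have xY : x \in Y by move: xX; rewrite !in_fsetU => /orP [-> | ->]; rewrite ?orbT.
by rewrite boundary_glue_l xY.
Qed.

End Gluing.

Lemma abstraction_glue_congr k G1 G2 G1' G2' :
  wf k G1 -> wf k G2 -> compatible G1 G2 ->
  wf k G1' -> wf k G2' -> compatible G1' G2' ->
  same_igraph (abstraction G1) (abstraction G1') ->
  same_igraph (abstraction G2) (abstraction G2') ->
  same_igraph (abstraction (glue G1 G2)) (abstraction (glue G1' G2')).
Proof.
move=> w1 w2 c w1' w2' c' e1 e2.
apply: same_trans (abstraction_glue w1 w2 c) _.
apply: same_trans (same_sym (abstraction_glue w1' w2' c')).
apply: abstraction_same (glue_same e1 e2).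
exact: wf_glue (wf_abstraction w1) (wf_abstraction w2) (compatible_abstraction w1 w2 c).
Qed.

Lemma compatible_extend k G1 G1' G2 : wf k G1 -> compatible G1 G2 ->
  gR G1' = gR G1 -> {in gV G1, gphi G1' =1 gphi G1} ->
  {subset gV G1 <= gV G1'} -> (forall x, x \in gV G1' -> x \in gV G2 -> x \in gV G1) ->
  compatible G1' G2.
Proof.
move=> wG1 [c1 [c2 c3]] eR ephi sub1 sub2.
have shared x : x \in gV G1' /\ x \in gV G2 <-> x \in gV G1 /\ x \in gV G2.
  by split=> -[x1 x2]; split => //; [apply: sub2 | apply: sub1].
have eJ j : inJ G1' G2 j <-> inJ G1 G2 j.
  rewrite /inJ eR; split=> -[[y yR <-] zL]; split => //; exists y => //.
    by rewrite ephi // (wf_R wG1).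
  by rewrite ephi // (wf_R wG1).
split; [|split] => x.
- rewrite shared c1 eR; split=> -[xR xJ]; split => //.
    by apply/eJ; rewrite ephi // (wf_R wG1).
  by move/eJ: xJ; rewrite ephi // (wf_R wG1).
- by rewrite shared c2 eJ.
- by move=> x1 x2; rewrite ephi ?c3 //; apply: sub2.
Qed.

Definition rename (h psi : nat -> nat) (G : igraph) : igraph :=
  IGraph (h @` gV G)
    (fun x y => exists a b, [/\ a \in gV G, b \in gV G, h a = x, h b = y & gE G a b])
    psi (h @` gL G) (h @` gR G).

Section Rename.
Variables (k : nat) (h psi : nat -> nat) (G : igraph).
Hypotheses (wG : wf k G) (h_inj : {in gV G &, injective h}).
Hypothesis psi_h : forall x, x \in gV G -> psi (h x) = gphi G x.

Lemma mem_rename (S : {fset nat}) x : {subset S <= gV G} -> x \in gV G ->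
  (h x \in h @` S) = (x \in S).
Proof.
move=> SV xV; apply/imfsetP/idP => [[a aS e] | xS]; last by exists x.
by rewrite (h_inj xV (SV _ aS) e).
Qed.

Lemma rename_iso_map : iso_map G (rename h psi G) h.
Proof.
split => /= [x xV | | y /imfsetP [x xV ->] | x y xV yV | | x xV | x xV].
- exact: in_imfset.
- exact: h_inj.
- by exists x.
- split=> [e | [a [b [aV bV /h_inj ea /h_inj eb e]]]]; first by exists x, y.
  by rewrite -ea // -eb.
- exact: psi_h.
- by rewrite mem_rename //; apply: wf_L wG.
- by rewrite mem_rename //; apply: wf_R wG.
Qed.

Lemma wf_rename : wf k (rename h psi G).
Proof.
have [L [R [EV [sym [irr [phi [injL injR]]]]]]] := wG.
have hV S : {subset S <= gV G} -> {subset h @` S <= h @` gV G}.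
  by move=> SV _ /imfsetP [x xS ->]; rewrite in_imfset ?SV.
split; first exact: hV.
split; first exact: hV.
split; first by move=> _ _ [a [b [aV bV <- <- _]]]; rewrite !in_imfset.
split; first by move=> _ _ [a [b [aV bV <- <- e]]]; exists b, a; split => //; apply: sym.
split; first by move=> _ [a [b [aV bV <- /(h_inj bV aV) ->]]]; apply: irr.
split; first by move=> _ /imfsetP [x xV ->] /=; rewrite psi_h //; apply: phi.
split; first by move=> _ _ /imfsetP [x xL ->] /imfsetP [y yL ->] /=;
  rewrite !psi_h ?L // => /injL ->.
by move=> _ _ /imfsetP [x xR ->] /imfsetP [y yR ->] /=; rewrite !psi_h ?R // => /injR ->.
Qed.

End Rename.

Section Realization.
Variables (k : nat) (G1 G1' G2 : igraph) (g : nat -> nat).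
Hypotheses (wG1 : wf k G1) (wG1' : wf k G1').
Hypotheses (gG : iso_map (abstraction G1) G1' g) (G12 : compatible G1' G2).

(* Shifting the inner vertices of G1 past N keeps them away from G1' and G2,
   so the renamed copy of G1 meets G2 exactly where G1' does. *)
Let N := (\max_(x <- gV G1' `|` gV G2) x).+1.
Let h x := if x \in gL G1 `|` gR G1 then g x else (N + x)%N.
Let psi y := if (N <= y)%N then gphi G1 (y - N) else gphi G1' y.
Let G1'' := rename h psi G1.

Lemma fresh_bound x : x \in gV G1' `|` gV G2 -> (x < N)%N.
Proof. by move=> xV; rewrite ltnS; apply: (leq_bigmax_seq (F := id)). Qed.

Lemma fresh_bound_l x : x \in gV G1' -> (x < N)%N.
Proof. by move=> x1; apply: fresh_bound; rewrite in_fsetU x1. Qed.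

Lemma fresh_bound_r x : x \in gV G2 -> (x < N)%N.
Proof. by move=> x2; apply: fresh_bound; rewrite in_fsetU x2 orbT. Qed.

Lemma realization_inj : {in gV G1 &, injective h}.
Proof.
move=> x y xV yV; rewrite /h.
case: ifP => xY; case: ifP => yY; first exact: (iso_map_inj gG).
- by have := fresh_bound_l (iso_mapV gG xY) => + e; rewrite e; lia.
- by have := fresh_bound_l (iso_mapV gG yY) => + e; rewrite -e; lia.
- lia.
Qed.

Lemma realization_phi x : x \in gV G1 -> psi (h x) = gphi G1 x.
Proof.
move=> xV; rewrite /psi /h; have [xY | xY] := boolP (x \in gL G1 `|` gR G1).
  by rewrite leqNgt fresh_bound_l ?(iso_mapV gG) //= (iso_map_phi gG).
by rewrite leq_addr addKn.
Qed.

Let hG : iso_map G1 G1'' h := rename_iso_map wG1 realization_inj realization_phi.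
Let wG1'' : wf k G1'' := wf_rename wG1 realization_inj realization_phi.

Lemma same_abstraction_rename : same_igraph (abstraction G1'') (abstraction G1').
Proof.
apply: (same_of_iso_maps (wf_abstraction wG1'') (wf_abstraction wG1')
  (abstraction_iso_map wG1 wG1'' hG)
  (iso_map_same (abstraction_idem G1) (abstraction_iso_map (wf_abstraction wG1) wG1' gG))).
by move=> x /= xY; rewrite /h xY.
Qed.

Lemma compatible_rename : compatible G1'' G2.
Proof.
apply: (compatible_extend wG1' G12).
- exact: same_R same_abstraction_rename.
- by move=> y /fresh_bound_l yN; rewrite /= /psi leqNgt yN.
- move=> y /(iso_map_onto gG) [x xY <-]; apply/imfsetP.
  by exists x; [apply: wf_boundary wG1 _ xY | rewrite /h xY].
- move=> _ /imfsetP [x xV ->]; rewrite /h; case: ifP => [xY _ | _ /fresh_bound_r].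
    exact: iso_mapV gG _ xY.
  lia.
Qed.

Lemma exists_realization : exists G, [/\ iso k G1 G, compatible G G2 &
  same_igraph (abstraction G) (abstraction G1')].
Proof.
exists G1''; split; [apply/isoP; split => //; exists h | |].
- exact: hG.
- exact: compatible_rename.
- exact: same_abstraction_rename.
Qed.

End Realization.

Definition saturated k (I : iclass) : Prop :=
  (forall G G', I G -> iso k G G' -> I G') /\ (forall G, I G -> wf k G).

Lemma saturated_oplus k I J : saturated k (oplus k I J).
Proof.
split; last by move=> G [G1 [G2 [_ _ _ /iso_wf_r]]].
by move=> G G' [G1 [G2 [I1 J2 c /iso_trans gG]]] /gG; exists G1, G2.
Qed.

Lemma saturated_abs k I : saturated k (abs k I).
Proof.
split; last by move=> G [G0 _ /iso_wf_r].
by move=> G G' [G0 IG0 /iso_trans gG] /gG; exists G0.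
Qed.

Lemma iso_abstraction_abstraction k G0 G :
  iso k (abstraction G0) G -> iso k (abstraction G0) (abstraction G).
Proof.
move=> gG; apply: iso_trans (abstraction_iso gG).
exact: iso_of_same (same_sym (abstraction_idem G0)) (iso_wf_l gG).
Qed.

Lemma abs_abstraction k I G : abs k I G -> abs k I (abstraction G).
Proof. by case=> G0 IG0 /iso_abstraction_abstraction; exists G0. Qed.

Lemma abs_idem k I : abs k (abs k I) = abs k I.
Proof.
apply: functional_extensionality => H; apply: propositional_extensionality.
split=> [[G [G0 IG0 /iso_abstraction_abstraction g0G] gH] | [G0 IG0 g0H]].
  by exists G0 => //; apply: iso_trans g0G gH.
have w0 := iso_wf_l g0H.
exists (abstraction G0); first by exists G0 => //; apply: iso_refl.
apply: iso_trans g0H; apply: iso_of_same (abstraction_idem G0) _.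
exact: wf_abstraction.
Qed.

Lemma iso_abstraction_same k G G' H :
  same_igraph (abstraction G') (abstraction G) -> wf k G' ->
  iso k (abstraction G) H -> iso k (abstraction G') H.
Proof. by move=> eG wG'; apply: iso_trans (iso_of_same eG (wf_abstraction wG')). Qed.

Lemma abs_oplus_sub k I J H : saturated k I ->
  abs k (oplus k I (abs k J)) H -> abs k (oplus k (abs k I) (abs k J)) H.
Proof.
move=> [_ Iwf] [G [G1 [G2 [I1 J2 c12 gG]]] gH].
have w1 := Iwf _ I1; have w2 := (saturated_abs k J).2 _ J2.
have c12' := compatible_abstraction w1 w2 c12.
have wa := wf_glue (wf_abstraction w1) (wf_abstraction w2) c12'.
exists (glue (abstraction G1) (abstraction G2)).
  exists (abstraction G1), (abstraction G2); split => //; last exact: iso_refl wa.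
    by exists G1 => //; apply/iso_refl/wf_abstraction.
  exact: abs_abstraction.
apply: iso_abstraction_same (same_sym (abstraction_glue w1 w2 c12)) wa _.
exact: iso_trans (abstraction_iso gG) gH.
Qed.

Lemma abs_oplus_sup k I J H : saturated k I ->
  abs k (oplus k (abs k I) (abs k J)) H -> abs k (oplus k I (abs k J)) H.
Proof.
move=> [Iiso Iwf] [G [G1' [G2 [[G1 I1 g1] J2 c12 gG]]] gH].
have w1 := Iwf _ I1; have w2 := (saturated_abs k J).2 _ J2.
have /isoP [_ w1' [g gG1]] := g1.
have [G1'' [g1'' c'' e'']] := exists_realization w1 w1' gG1 c12.
have w1'' := iso_wf_r g1''.
exists (glue G1'' G2).
  by exists G1'', G2; split => //; [apply: Iiso g1'' | apply/iso_refl/wf_glue].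
apply: iso_abstraction_same (wf_glue w1'' w2 c'') (iso_trans (abstraction_iso gG) gH).
exact: (abstraction_glue_congr w1'' w2 c'' w1' w2 c12 e'' (same_refl _)).
Qed.

Lemma abs_oplus_abs k I J : saturated k I ->
  abs k (oplus k I (abs k J)) = abs k (oplus k (abs k I) (abs k J)).
Proof.
move=> sI; apply: functional_extensionality => H; apply: propositional_extensionality.
by split; [apply: abs_oplus_sub | apply: abs_oplus_sup].
Qed.

Lemma abs_foldl_oplus k I As : saturated k I -> all_letters (in_A k) As ->
  abs k (foldl (oplus k) I As) = foldl (boxplus k) (abs k I) As.
Proof.
elim: As I => [|A As IH] I sI //= [[J _ ->] hAs].
rewrite IH //; last exact: saturated_oplus.
by rewrite abs_oplus_abs.
Qed.

(* The word w = A1 A2 ... An is given as A1 :: As (nonempty);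
   products are bracketed from the left. *)
Theorem lemma3p4 (k : nat) (hk : 0 < k) (A1 : iclass) (As : seq iclass)
  (hA : all_letters (in_A k) (A1 :: As)) :
  abs k (foldl (oplus k) A1 As) = foldl (boxplus k) A1 As.
Proof.
have [[I1 _ ->] hAs] := hA.
by rewrite abs_foldl_oplus ?abs_idem //; apply: saturated_abs.
Qed.
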